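(* Consider an $\mathbb{H}_{2n+1}$-structure on $\mathbb{P}V$ such that $T$ fixes every point of the boundary hyperplane $\mathbb{P}V'$. Let $v$ be the point $\overline{\mathbb{I}\cdot o}\setminus\mathbb{I}\cdot o$ for $o$ in the open orbit, $\hat v\in V$ a nonzero representative, and $\widetilde V=V/\mathbb{C}\hat v$. Then $\mathbb{I}$ (which fixes $v$) acts trivially on $\mathbb{P}\widetilde V$.
   Context: Work over $\mathbb{C}$, $n\ge1$. The Heisenberg group $\mathbb{H}_{2n+1}$ is $\mathbb{W}\times\mathbb{C}$ ($\mathbb{W}$ a $2n$-dimensional space with non-degenerate skew form $\omega$) with law $(w_1,t_1)(w_2,t_2)=(w_1+w_2,t_1+t_2+\tfrac12\omega(w_1,w_2))$; $T=(0,1)$, $\mathbb{I}=\mathbb{C}T$ its center. $V\cong\mathbb{C}^{2n+2}$. An $\mathbb{H}_{2n+1}$-structure on $\mathbb{P}V$ is an effective algebraic action with a dense open orbit, whose boundary (complement of the open orbit) is a hyperplane $\mathbb{P}V'$. The point $v$ lies on the boundary and does not depend on the choice of $o$; projective transformations fixing $v$ preserve the line $\mathbb{C}\hat v$ and so induce projective transformations of $\mathbb{P}\widetilde V$. *)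

From HB Require Import structures.
From mathcomp Require Import all_boot all_algebra.
From mathcomp Require Import reals complex.
From mathcomp Require Import mpoly.

Set Implicit Arguments.
Unset Strict Implicit.
Unset Printing Implicit Defensive.

Import GRing.Theory Num.Theory.
Local Open Scope ring_scope.

(* Heisenberg group H_{2m+1} = W x C with W = 'rV_m (m = 2n), symplectic form
   omega(w1,w2) = w1 Om w2^T, law (w1,t1)(w2,t2) = (w1+w2, t1+t2+1/2 omega(w1,w2)). *)
Definition omega (C : comRingType) m (Om : 'M[C]_m) (w1 w2 : 'rV[C]_m) : C :=
  (w1 *m Om *m w2^T) 0 0.

Definition heis_mul (C : fieldType) m (Om : 'M[C]_m) (g h : 'rV[C]_m * C)
  : 'rV[C]_m * C :=
  (g.1 + h.1, g.2 + h.2 + 2^-1 * omega Om g.1 h.1).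

Definition heis_coords (C : fieldType) m (g : 'rV[C]_m * C) : 'I_(m + 1) -> C :=
  fun i => (row_mx g.1 (g.2%:M : 'M[C]_1)) 0 i.

(* vectors of V = C^N are columns; points of P V are nonzero columns up to scalars *)
Definition proj_rel (C : fieldType) N (x y : 'cV[C]_N) : Prop :=
  exists c : C, c != 0 /\ y = c *: x.

Definition vec_coords (C : fieldType) N (x : 'cV[C]_N) : 'I_N -> C :=
  fun i => x i 0.

(* The action is given by a lift rho : H -> GL(V) of H -> PGL(V) *)
Definition algebraic_map (C : fieldType) m N (rho : 'rV[C]_m * C -> 'M[C]_N) : Prop :=
  exists P : 'I_N -> 'I_N -> {mpoly C[m + 1]},
    forall g i j, rho g i j = (P i j).@[heis_coords g].

Definition proj_action (C : fieldType) m N (Om : 'M[C]_m)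
  (rho : 'rV[C]_m * C -> 'M[C]_N) : Prop :=
  (forall g, rho g \in unitmx) /\
  (forall g h, exists c : C, c != 0 /\ rho (heis_mul Om g h) = c *: (rho g *m rho h)).

Definition effective_action (C : fieldType) m N (rho : 'rV[C]_m * C -> 'M[C]_N) : Prop :=
  forall g, (forall x : 'cV[C]_N, x != 0 -> exists c : C, rho g *m x = c *: x) ->
    g = (0, 0).

Definition orbit (C : fieldType) m N (rho : 'rV[C]_m * C -> 'M[C]_N) (o x : 'cV[C]_N)
  : Prop := exists g, proj_rel (rho g *m o) x.

(* An H-structure on P V with boundary hyperplane P(ker phi): an effective algebraic
   projective action whose open orbit is exactly the complement of P(ker phi). *)
Definition heis_structure (C : fieldType) m N (Om : 'M[C]_m)
  (rho : 'rV[C]_m * C -> 'M[C]_N) (phi : 'rV[C]_N) : Prop :=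
  [/\ algebraic_map rho, proj_action Om rho, effective_action rho, phi != 0 &
    exists o0 : 'cV[C]_N, o0 != 0 /\
      forall x : 'cV[C]_N, x != 0 -> (orbit rho o0 x <-> (phi *m x) 0 0 != 0)].

(* the orbit I.[o] of the center I = C T, T = (0,1) *)
Definition center_orbit (C : fieldType) m N (rho : 'rV[C]_m * C -> 'M[C]_N)
  (o x : 'cV[C]_N) : Prop :=
  x != 0 /\ exists t : C, proj_rel (rho (0, t) *m o) x.

(* Zariski closure in P V of a set S of points (given by nonzero representatives):
   common zeros of the homogeneous polynomials vanishing on S. *)
Definition proj_closure (C : fieldType) N (S : 'cV[C]_N -> Prop) (y : 'cV[C]_N) : Prop :=
  y != 0 /\
  forall (d : nat) (p : {mpoly C[N]}), p \is d.-homog ->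
    (forall x, S x -> p.@[vec_coords x] = 0) -> p.@[vec_coords y] = 0.

(* Write A s = rho (0, s). The map s |-> A s is a projective representation of (C, +)
   with polynomial entries, and two rigidity facts drive everything: a polynomial
   identity that holds at all natural numbers holds everywhere, and a nowhere vanishing
   polynomial over an algebraically closed field is constant. Since A 1 fixes the
   boundary hyperplane ker phi pointwise, so do all A k for k natural, hence all A s;
   as A s is invertible its eigenvalue there is a constant s0. Then
   w s := A s o - s0 o lies in ker phi and is additive in s, hence equals s w for
   w := w 1. So every A t is the transvection x |-> s0 x + t phi(x) / phi(o) w, and the
   orbit I.o is the affine line {[o + s w]}, whose only boundary point is v = [w].
   Modulo C vhat = C w, every A t is therefore a scalar. *)

From mathcomp Require Import all_boot all_algebra.
From mathcomp Require Import reals complex.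
From mathcomp Require Import mpoly.
From mathcomp Require Import ring.
Set Implicit Arguments.
Unset Strict Implicit.
Unset Printing Implicit Defensive.
Import GRing.Theory Num.Theory.
Local Open Scope ring_scope.

Section PolynomialFunctions.
Variable R : comNzRingType.

Definition polyfun (f : R -> R) := exists q : {poly R}, forall t, f t = q.[t].

Lemma eq_polyfun f g : f =1 g -> polyfun f -> polyfun g.
Proof. by move=> fg [q fq]; exists q => t; rewrite -fg. Qed.

Lemma polyfun_cst c : polyfun (fun=> c).
Proof. by exists c%:P => t; rewrite hornerC. Qed.

Lemma polyfun_id : polyfun id.
Proof. by exists 'X => t; rewrite hornerX. Qed.

Lemma polyfunD f g : polyfun f -> polyfun g -> polyfun (fun t => f t + g t).
Proof. by move=> [p fp] [q gq]; exists (p + q) => t; rewrite hornerD fp gq. Qed.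

Lemma polyfunN f : polyfun f -> polyfun (fun t => - f t).
Proof. by move=> [p fp]; exists (- p) => t; rewrite hornerN fp. Qed.

Lemma polyfunM f g : polyfun f -> polyfun g -> polyfun (fun t => f t * g t).
Proof. by move=> [p fp] [q gq]; exists (p * q) => t; rewrite hornerM fp gq. Qed.

Lemma polyfunX f k : polyfun f -> polyfun (fun t => f t ^+ k).
Proof. by move=> [p fp]; exists (p ^+ k) => t; rewrite horner_exp fp. Qed.

Lemma polyfun_sum (I : Type) (r : seq I) (F : I -> R -> R) :
  (forall i, polyfun (F i)) -> polyfun (fun t => \sum_(i <- r) F i t).
Proof.
move=> pF; elim: r => [|i r IHr].
  by apply: eq_polyfun (polyfun_cst 0) => t; rewrite big_nil.
by apply: eq_polyfun (polyfunD (pF i) IHr) => t; rewrite big_cons.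
Qed.

Lemma polyfun_prod (I : Type) (r : seq I) (F : I -> R -> R) :
  (forall i, polyfun (F i)) -> polyfun (fun t => \prod_(i <- r) F i t).
Proof.
move=> pF; elim: r => [|i r IHr].
  by apply: eq_polyfun (polyfun_cst 1) => t; rewrite big_nil.
by apply: eq_polyfun (polyfunM (pF i) IHr) => t; rewrite big_cons.
Qed.

Definition polyfun_mx m n (A : R -> 'M[R]_(m, n)) :=
  forall i j, polyfun (fun t => A t i j).

Lemma polyfun_mx_cst m n (B : 'M[R]_(m, n)) : polyfun_mx (fun=> B).
Proof. by move=> i j; apply: polyfun_cst. Qed.

Lemma polyfun_mxD m n (A B : R -> 'M[R]_(m, n)) :
  polyfun_mx A -> polyfun_mx B -> polyfun_mx (fun t => A t + B t).
Proof.
by move=> pA pB i j; apply: eq_polyfun (polyfunD (pA i j) (pB i j)) => t; rewrite mxE.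
Qed.

Lemma polyfun_mxZ m n f (A : R -> 'M[R]_(m, n)) :
  polyfun f -> polyfun_mx A -> polyfun_mx (fun t => f t *: A t).
Proof.
by move=> pf pA i j; apply: eq_polyfun (polyfunM pf (pA i j)) => t; rewrite mxE.
Qed.

Lemma polyfun_mxM m n p (A : R -> 'M[R]_(m, n)) (B : R -> 'M[R]_(n, p)) :
  polyfun_mx A -> polyfun_mx B -> polyfun_mx (fun t => A t *m B t).
Proof.
move=> pA pB i j; have := polyfun_sum (index_enum 'I_n)
  (fun k => polyfunM (pA i k) (pB k j)).
by apply: eq_polyfun => t; rewrite mxE.
Qed.

End PolynomialFunctions.

Lemma polyfun_nat_eq0 (R : numDomainType) (f : R -> R) :
  polyfun f -> (forall k : nat, f k%:R = 0) -> f =1 fun=> 0.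
Proof.
move=> [q fq] f_nat t; rewrite fq; suff -> : q = 0 by rewrite horner0.
apply/eqP; apply: contraT => q_neq0.
pose nats := [seq (k%:R : R) | k <- iota 0 (size q)].
have roots_nats : all (root q) nats.
  by apply/allP => _ /mapP[k _ ->]; rewrite /root -fq f_nat.
have uniq_nats : uniq nats.
  by rewrite map_inj_uniq ?iota_uniq // => a b /eqP; rewrite eqr_nat => /eqP.
by have := max_poly_roots q_neq0 roots_nats uniq_nats; rewrite size_map size_iota ltnn.
Qed.

Lemma polyfun_mx_nat_eq0 (R : numDomainType) m n (A : R -> 'M[R]_(m, n)) :
  polyfun_mx A -> (forall k : nat, A k%:R = 0) -> A =1 fun=> 0.
Proof.
move=> pA A_nat t; apply/matrixP => i j; rewrite mxE.
by apply: (polyfun_nat_eq0 (pA i j)) => k; rewrite A_nat mxE.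
Qed.

Lemma polyfun_neq0_const (F : closedFieldType) (f : F -> F) :
  polyfun f -> (forall t, f t != 0) -> f =1 fun=> f 0.
Proof.
move=> [q fq] f_neq0 t; rewrite !fq.
have /eqP size_q : size q == 1%N.
  by apply: contraT => /closed_rootP[x qx]; have := f_neq0 x; rewrite fq (rootP qx) eqxx.
by rewrite [q]size1_polyC ?size_q // !hornerC.
Qed.

Section LinearForms.
Variables (F : fieldType) (N : nat).
Implicit Types (l phi : 'rV[F]_N) (x y z o v w k : 'cV[F]_N) (M : 'M[F]_N).

Lemma formDr l y z : (l *m (y + z)) 0 0 = (l *m y) 0 0 + (l *m z) 0 0.
Proof. by rewrite mulmxDr mxE. Qed.

Lemma formZr l a y : (l *m (a *: y)) 0 0 = a * (l *m y) 0 0.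
Proof. by rewrite -scalemxAr mxE. Qed.

Lemma formBl l l' y : ((l - l') *m y) 0 0 = (l *m y) 0 0 - (l' *m y) 0 0.
Proof. by rewrite mulmxBl !mxE. Qed.

Lemma formZl l a y : ((a *: l) *m y) 0 0 = a * (l *m y) 0 0.
Proof. by rewrite -scalemxAl mxE. Qed.

Lemma scalev_inj x a b : x != 0 -> a *: x = b *: x -> a = b.
Proof.
move=> x_neq0 /eqP; rewrite -subr_eq0 -scalerBl scaler_eq0 (negbTE x_neq0) orbF.
by rewrite subr_eq0 => /eqP.
Qed.

Lemma unitmx_col_eq0 M x : M \in unitmx -> M *m x = 0 -> x = 0.
Proof. by move=> M_unit Mx0; rewrite -(mulKmx M_unit x) Mx0 mulmx0. Qed.

Lemma eigenvalueE M x c j : x j 0 != 0 -> M *m x = c *: x -> c = (M *m x) j 0 / x j 0.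
Proof. by move=> xj_neq0 ->; rewrite mxE mulfK. Qed.

Lemma proportional_of_minors x y j : x j 0 != 0 ->
  (forall i, y i 0 * x j 0 = x i 0 * y j 0) -> y = (y j 0 / x j 0) *: x.
Proof.
move=> xj_neq0 minors0; apply/matrixP => i k; rewrite ord1 mxE.
by rewrite mulrAC [y j 0 * _]mulrC -minors0 mulfK.
Qed.

Lemma eigen_add M x y a b c : x != 0 ->
  M *m x = a *: x -> M *m y = b *: y -> M *m (x + y) = c *: (x + y) ->
  M *m y = a *: y.
Proof.
move=> x_neq0 Mx My; rewrite mulmxDr Mx My scalerDr => Exy.
have E : (c - a) *: x = (b - c) *: y.
  apply/matrixP => i k; have := congr1 (fun v : 'cV[F]_N => v i k) Exy; rewrite !mxE => Eik.
  apply/eqP; rewrite -subr_eq0; apply/eqP.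
  transitivity (c * x i k + c * y i k - (a * x i k + b * y i k)); first by ring.
  by rewrite Eik subrr.
have [ca | ca] := eqVneq c a.
  move: E; rewrite ca subrr scale0r => /esym/eqP; rewrite scaler_eq0 subr_eq0.
  by case/orP => [/eqP -> | /eqP ->]; rewrite ?scaler0.
have xE : x = ((b - c) / (c - a)) *: y.
  by rewrite mulrC -scalerA -E scalerA mulVf ?scale1r // subr_eq0.
congr (_ *: _); apply/esym.
by apply: (scalev_inj x_neq0); rewrite -Mx {1}xE -scalemxAr My scalerA mulrC -scalerA -xE.
Qed.

Lemma hyperplane_nontrivial phi : (1 < N)%N -> exists2 k : 'cV_N, k != 0 & (phi *m k) 0 0 = 0.
Proof.
move=> N_gt1; have : kermx phi^T != 0.
  by rewrite -mxrank_eq0 mxrank_ker -lt0n subn_gt0 (leq_ltn_trans (rank_leq_col _)).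
case/rowV0Pn => v /sub_kermxP v_ker v_neq0; exists v^T; first by rewrite trmx_eq0.
by rewrite -[phi]trmxK -trmx_mul v_ker !mxE.
Qed.

Lemma eigen_hyperplane_scalar phi M k0 c0 :
  (forall y, (phi *m y) 0 0 = 0 -> exists c, M *m y = c *: y) ->
  k0 != 0 -> (phi *m k0) 0 0 = 0 -> M *m k0 = c0 *: k0 ->
  forall y, (phi *m y) 0 0 = 0 -> M *m y = c0 *: y.
Proof.
move=> eigen k0_neq0 phik0 Mk0 y phiy.
have [b My] := eigen y phiy.
have phik0y : (phi *m (k0 + y)) 0 0 = 0 by rewrite formDr phik0 phiy addr0.
have [c Mk0y] := eigen (k0 + y) phik0y.
exact: eigen_add k0_neq0 Mk0 My Mk0y.
Qed.

Lemma forms_vanishing_line w v :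
  (forall l, (l *m w) 0 0 = 0 -> (l *m v) 0 0 = 0) -> exists b, v = b *: w.
Proof.
move=> forms; have [w0 | /cV0Pn[j wj]] := eqVneq w 0.
  exists 0; rewrite scale0r; apply/matrixP => i k; rewrite ord1 !mxE.
  by have := forms (delta_mx 0 i); rewrite w0 mulmx0 -rowE !mxE; apply.
exists (v j 0 / w j 0); apply: proportional_of_minors => // i.
have := forms (w j 0 *: delta_mx 0 i - w i 0 *: delta_mx 0 j).
rewrite !(formBl, formZl) -!rowE !mxE [w j 0 * _]mulrC subrr => /(_ erefl)/eqP.
by rewrite subr_eq0 mulrC => /eqP.
Qed.

Lemma transvection_action phi M o w s0 t :
  (phi *m o) 0 0 != 0 -> (phi *m w) 0 0 = 0 ->
  (forall y, (phi *m y) 0 0 = 0 -> M *m y = s0 *: y) ->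
  M *m o = s0 *: o + t *: w ->
  forall x, M *m x = s0 *: x + (t * (phi *m x) 0 0 / (phi *m o) 0 0) *: w.
Proof.
move=> phio_neq0 phiw Mker Mo x; set a := (phi *m x) 0 0 / (phi *m o) 0 0.
have -> : x = (x - a *: o) + a *: o by rewrite subrK.
have phiy : (phi *m (x - a *: o)) 0 0 = 0.
  by rewrite formDr -scaleNr formZr mulNr divfK // subrr.
rewrite mulmxDr Mker // -scalemxAr Mo formDr formZr phiy add0r divfK // scalerDr.
rewrite subrK scalerDr scalerN !scalerA [a * s0]mulrC addrA subrK.
by congr (_ + _ *: _); rewrite /a; ring.
Qed.

Lemma affine_line_boundary phi o w s0 v :
  s0 != 0 -> (phi *m o) 0 0 != 0 -> (phi *m w) 0 0 = 0 -> v != 0 ->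
  (forall l, (forall s, (l *m (s0 *: o + s *: w)) 0 0 = 0) -> (l *m v) 0 0 = 0) ->
  ~ (exists c s, c != 0 /\ v = c *: (s0 *: o + s *: w)) ->
  exists2 b, b != 0 & v = b *: w.
Proof.
move=> s0_neq0 phio_neq0 phiw v_neq0 forms v_off_line.
set g := (phi *m v) 0 0 / (phi *m o) 0 0.
have [b vE] : exists b, v - g *: o = b *: w.
  apply: forms_vanishing_line => l lw.
  pose l' := l - ((l *m o) 0 0 / (phi *m o) 0 0) *: phi.
  have l'_line s : (l' *m (s0 *: o + s *: w)) 0 0 = 0.
    rewrite formBl formZl !formDr !formZr lw phiw !mulr0 !addr0.
    by rewrite mulrCA divfK // subrr.
  have := forms l' l'_line; rewrite formBl formZl formDr -scaleNr formZr => l'v.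
  by rewrite -[RHS]l'v /g; ring.
have {}vE : v = g *: o + b *: w by rewrite -vE addrC subrK.
have [g0 | g_neq0] := eqVneq g 0; last first.
  case: v_off_line; exists (g / s0), (b * s0 / g); split.
    by rewrite mulf_neq0 ?invr_eq0.
  rewrite vE scalerDr !scalerA; congr (_ *: _ + _ *: _); first by rewrite divfK.
  by field; apply/andP.
exists b; last by rewrite vE g0 scale0r add0r.
by apply: contraNneq v_neq0 => b0; rewrite vE g0 b0 !scale0r addr0.
Qed.

End LinearForms.

Lemma polyfun_mx_line (F : numFieldType) N (v : F -> 'cV[F]_N) y :
  y != 0 -> polyfun_mx v -> (forall k : nat, exists c, v k%:R = c *: y) ->
  forall s, exists c, v s = c *: y.
Proof.
move=> /cV0Pn[j yj] pv v_nat s; exists (v s j 0 / y j 0); apply: proportional_of_minors => // i.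
pose minor u := v u i 0 * y j 0 - y i 0 * v u j 0.
have pminor : polyfun minor.
  apply: polyfunD; first exact: polyfunM (pv i 0) (polyfun_cst _).
  exact/polyfunN/(polyfunM (polyfun_cst _) (pv j 0)).
apply/eqP; rewrite -subr_eq0; apply/eqP.
apply: (polyfun_nat_eq0 pminor _ s) => k.
by rewrite /minor; have [c ->] := v_nat k; rewrite !mxE; ring.
Qed.

Lemma polyfun_mx_additive (R : numDomainType) m n (f : R -> 'M[R]_(m, n)) :
  polyfun_mx f -> {morph f : s u / s + u} -> forall s, f s = s *: f 1.
Proof.
move=> pf f_add s; apply/eqP; rewrite -subr_eq0 -scaleNr; apply/eqP.
have f_nat k : f k%:R = k%:R *: f 1.
  elim: k => [|k IHk]; last by rewrite -natr1 f_add IHk scalerDl scale1r.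
  by rewrite mulr0n scale0r; apply: (addrI (f 0)); rewrite -f_add !addr0.
have pg := polyfun_mxD pf (polyfun_mxZ (polyfunN (polyfun_id R)) (polyfun_mx_cst (f 1))).
by apply: (polyfun_mx_nat_eq0 pg _ s) => k; rewrite scaleNr f_nat subrr.
Qed.

Section ProjectiveOneParameterGroup.
Variables (C : numClosedFieldType) (N : nat) (A : C -> 'M[C]_N).
Hypothesis A_poly : polyfun_mx A.
Hypothesis A_unit : forall s, A s \in unitmx.
Hypothesis A_add : forall s u, exists c, c != 0 /\ A (s + u) = c *: (A s *m A u).
Implicit Types (x y : 'cV[C]_N).

Lemma projective_group0_scalar : exists2 s0, s0 != 0 & A 0 = s0%:M.
Proof.
have [c [c_neq0 A00]] := A_add 0 0; rewrite addr0 in A00.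
exists c^-1; first by rewrite invr_eq0.
have := congr1 (mulmx (invmx (A 0))) A00.
rewrite mulVmx // -scalemxAr mulmxA mulVmx // mul1mx => /(congr1 ( *:%R c^-1)).
by rewrite scalerA mulVf // scale1r scalemx1 => ->.
Qed.

Variable s0 : C.
Hypothesis s0_neq0 : s0 != 0.
Hypothesis A0 : A 0 = s0%:M.

Lemma eigen_nat y c1 : A 1 *m y = c1 *: y -> forall k : nat, exists c, A k%:R *m y = c *: y.
Proof.
move=> A1y; elim=> [|k [c Aky]]; first by exists s0; rewrite A0 mul_scalar_mx.
have [d [_ Ak1]] := A_add k%:R 1; exists (d * c1 * c).
by rewrite -natr1 Ak1 -scalemxAl -mulmxA A1y -scalemxAr Aky !scalerA.
Qed.

Lemma eigen_all y : (exists c, A 1 *m y = c *: y) -> forall s, exists c, A s *m y = c *: y.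
Proof.
move=> [c1 A1y] s; have [-> | y_neq0] := eqVneq y 0.
  by exists 0; rewrite mulmx0 scaler0.
exact: polyfun_mx_line y_neq0 (polyfun_mxM A_poly (polyfun_mx_cst y)) (eigen_nat A1y) s.
Qed.

Variable phi : 'rV[C]_N.
Hypothesis N_gt1 : (1 < N)%N.
Hypothesis A1_hyperplane :
  forall y, (phi *m y) 0 0 = 0 -> exists c, A 1 *m y = c *: y.

Lemma hyperplane_scalar s y : (phi *m y) 0 0 = 0 -> A s *m y = s0 *: y.
Proof.
have [k k_neq0 phik] := hyperplane_nontrivial phi N_gt1; have /cV0Pn[j kj] := k_neq0.
pose c u := (A u *m k) j 0 / k j 0.
have Ak u : A u *m k = c u *: k.
  by have [d Akd] := eigen_all (A1_hyperplane phik) u; rewrite {1}Akd (eigenvalueE kj Akd).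
have c_poly : polyfun c.
  exact: polyfunM (polyfun_mxM A_poly (polyfun_mx_cst k) j 0) (polyfun_cst _).
have c_neq0 u : c u != 0.
  apply: contraNneq k_neq0 => cu0; apply/eqP/(unitmx_col_eq0 (A_unit u)).
  by rewrite Ak cu0 scale0r.
have c0 : c 0 = s0 by apply: (scalev_inj k_neq0); rewrite -Ak A0 mul_scalar_mx.
move: y; apply: (eigen_hyperplane_scalar (M := A s) _ k_neq0 phik).
  by move=> z /A1_hyperplane/eigen_all.
by rewrite Ak (polyfun_neq0_const c_poly c_neq0) c0.
Qed.

Variable o : 'cV[C]_N.
Hypothesis phi_o : (phi *m o) 0 0 != 0.

Lemma phi_orbit s : (phi *m (A s *m o)) 0 0 = s0 * (phi *m o) 0 0.
Proof.
pose a u := (phi *m (A u *m o)) 0 0.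
have a_poly : polyfun a.
  exact: polyfun_mxM (polyfun_mx_cst phi) (polyfun_mxM A_poly (polyfun_mx_cst o)) 0 0.
have a_neq0 u : a u != 0.
  apply/eqP => au0; have Auo : A u *m o = s0 *: o.
    apply/eqP; rewrite -subr_eq0; apply/eqP/(unitmx_col_eq0 (A_unit u)).
    by rewrite mulmxBr -scalemxAr (hyperplane_scalar u au0) subrr.
  move: au0; rewrite /a Auo formZr => /eqP.
  by rewrite mulf_eq0 (negbTE s0_neq0) (negbTE phi_o).
by have := polyfun_neq0_const a_poly a_neq0 s; rewrite /a A0 mul_scalar_mx formZr.
Qed.

Lemma orbit_affine :
  exists2 w, (phi *m w) 0 0 = 0 & forall s, A s *m o = s0 *: o + s *: w.
Proof.
pose w s := A s *m o - s0 *: o.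
have w_hyperplane s : (phi *m w s) 0 0 = 0.
  by rewrite formDr -scaleNr formZr phi_orbit mulNr subrr.
have w_add : {morph w : s u / s + u}.
  move=> s u; have [d [_ Asu]] := A_add s u.
  have Auo : A u *m o = s0 *: o + w u by rewrite addrC subrK.
  have Asuo : A (s + u) *m o = (d * s0) *: (A s *m o + w u).
    rewrite Asu -scalemxAl -mulmxA Auo mulmxDr -scalemxAr.
    by rewrite hyperplane_scalar // -scalerDr scalerA.
  have ds0 : d * s0 = 1.
    have := congr1 (fun y => (phi *m y) 0 0) Asuo.
    rewrite /= formZr formDr w_hyperplane addr0 !phi_orbit -{1}[_ * _]mul1r.
    by move/mulIf => -> //; rewrite mulf_neq0.
  by rewrite /w Asuo ds0 scale1r addrAC.
have w_poly : polyfun_mx w.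
  exact: polyfun_mxD (polyfun_mxM A_poly (polyfun_mx_cst o)) (polyfun_mx_cst _).
exists (w 1) => // s.
by rewrite -(polyfun_mx_additive w_poly w_add) addrC subrK.
Qed.

Lemma center_transvection : exists2 w, (phi *m w) 0 0 = 0 &
  forall s x, A s *m x = s0 *: x + (s * (phi *m x) 0 0 / (phi *m o) 0 0) *: w.
Proof.
have [w phi_w A_o] := orbit_affine; exists w => // s.
exact: transvection_action phi_o phi_w (hyperplane_scalar s) (A_o s).
Qed.

End ProjectiveOneParameterGroup.

Lemma heis_mul_center (C : fieldType) m (Om : 'M[C]_m) s u :
  heis_mul Om (0, s) (0, u) = (0, s + u).
Proof. by rewrite /heis_mul /omega /= !mul0mx mxE mulr0 !addr0. Qed.

Lemma polyfun_meval_center (C : fieldType) m (p : {mpoly C[m + 1]}) :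
  polyfun (fun t => p.@[heis_coords ((0 : 'rV[C]_m), t)]).
Proof.
have coord_poly i : polyfun (fun t => heis_coords ((0 : 'rV[C]_m), t) i).
  apply: (@eq_polyfun _ (fun t => if split i is inl _ then 0 else t)).
    by move=> t; rewrite /heis_coords mxE; case: split => k; rewrite !mxE // ord1 eqxx.
  by case: split => _; [apply: polyfun_cst | apply: polyfun_id].
apply: eq_polyfun (fun t => esym (mevalE _ p)) _.
apply: polyfun_sum => mu; apply: polyfunM (polyfun_cst _) _.
by apply: polyfun_prod => i; apply: polyfunX.
Qed.

Lemma algebraic_map_center (C : fieldType) m N (rho : 'rV[C]_m * C -> 'M[C]_N) :
  algebraic_map rho -> polyfun_mx (fun t => rho (0, t)).
Proof.
by case=> P rhoP i j; apply: eq_polyfun (polyfun_meval_center (P i j)) => t; rewrite rhoP.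
Qed.

Lemma proj_closure_forms (C : fieldType) N (S : 'cV[C]_N -> Prop) v (l : 'rV[C]_N) :
  proj_closure S v -> (forall y, S y -> (l *m y) 0 0 = 0) -> (l *m v) 0 0 = 0.
Proof.
case=> _ closure l_S; pose p : {mpoly C[N]} := \sum_k l 0 k *: 'X_k.
have pE y : p.@[vec_coords y] = (l *m y) 0 0.
  by rewrite raddf_sum mxE; apply: eq_bigr => k _ /=; rewrite mevalZ mevalXU.
have p_homog : p \is 1.-homog.
  by apply: rpred_sum => k _; apply/rpredZ; rewrite dhomogX; apply/mdeg1P; exists k.
by rewrite -pE; apply: closure p_homog _ => y Sy; rewrite pE l_S.
Qed.

Local Open Scope complex_scope.

Theorem lemma2p6 (R : realType) (n : nat) (Om : 'M[R[i]]_(2 * n))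
  (rho : 'rV[R[i]]_(2 * n) * R[i] -> 'M[R[i]]_((2 * n).+2))
  (phi : 'rV[R[i]]_((2 * n).+2)) :
  (0 < n)%N ->
  Om^T = - Om -> \det Om != 0 ->
  heis_structure Om rho phi ->
  (* T fixes every point of the boundary hyperplane P(ker phi) *)
  (forall x : 'cV[R[i]]_((2 * n).+2), x != 0 -> (phi *m x) 0 0 = 0 ->
     exists c : R[i], rho (0, 1) *m x = c *: x) ->
  forall o vhat : 'cV[R[i]]_((2 * n).+2),
    o != 0 -> (phi *m o) 0 0 != 0 ->
    (* [vhat] = v is the point of closure(I.o) \ I.o *)
    proj_closure (center_orbit rho o) vhat -> ~ center_orbit rho o vhat ->
    (* I acts trivially on P(V / C vhat) *)
    forall (t : R[i]) (x : 'cV[R[i]]_((2 * n).+2)),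
      exists lam mu : R[i], rho (0, t) *m x = lam *: x + mu *: vhat.
Proof.
move=> _ _ _ [rho_alg [rho_unit rho_mul] _ _ _] T_fix o vhat _ phi_o vhat_cl vhat_off t x.
pose A s := rho (0, s).
have A_poly : polyfun_mx A := algebraic_map_center rho_alg.
have A_unit s : A s \in unitmx := rho_unit (0, s).
have A_add s u : exists c, c != 0 /\ A (s + u) = c *: (A s *m A u).
  by rewrite /A -(heis_mul_center Om); apply: rho_mul.
have [s0 s0_neq0 A0] := projective_group0_scalar A_unit A_add.
have A1_hyperplane (y : 'cV_(2 * n).+2) : (phi *m y) 0 0 = 0 -> exists c, A 1 *m y = c *: y.
  have [-> | y_neq0] := eqVneq y 0; last exact: T_fix y_neq0.
  by exists 0; rewrite mulmx0 scaler0.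
have [w phi_w A_x] :=
  center_transvection A_poly A_unit A_add s0_neq0 A0 isT A1_hyperplane phi_o.
have A_o s : A s *m o = s0 *: o + s *: w by rewrite A_x mulfK.
have [b b_neq0 vhatE] : exists2 b, b != 0 & vhat = b *: w.
  apply: affine_line_boundary s0_neq0 phi_o phi_w vhat_cl.1 _ _ => [l l_line | ].
    apply: proj_closure_forms vhat_cl _ => _ [_ [s [c [_ ->]]]].
    by rewrite formZr A_o l_line mulr0.
  move=> [c [s [c_neq0 vhatE]]]; apply: vhat_off; split; first exact: vhat_cl.1.
  by exists s, c; rewrite A_o.
exists s0, (t * (phi *m x) 0 0 / (phi *m o) 0 0 / b).
by rewrite A_x vhatE scalerA divfK.
Qed.
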